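(* Let $P\subset\mathbb{R}^d$ with $|P|=n$, let $D=\operatorname{diam}P$, $r\in[n]$ and $\varepsilon>0$. Then there is a set $F\subset\mathbb{R}^d$ with $|F|\le r^r\varepsilon^{-r}$ such that for every $Y\subseteq P$ with $|Y|\ge\varepsilon n$, \[ \left(F+\frac{3.5D}{\sqrt r}B\right)\cap\operatorname{conv}Y\ne\emptyset. \]
   Context: $B$ denotes the closed Euclidean unit ball centred at the origin of $\mathbb{R}^d$, and $+$ is Minkowski sum, so $F+\rho B$ is the union of the closed balls of radius $\rho$ centred at points of $F$. *)

From HB Require Import structures.
From mathcomp Require Import all_boot all_order all_algebra.
From mathcomp Require Import reals.
Set Implicit Arguments. Unset Strict Implicit. Unset Printing Implicit Defensive.
Import Order.TTheory GRing.Theory Num.Theory.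
Local Open Scope ring_scope.

Definition enorm (R : realType) (d : nat) (x : 'rV[R]_d) : R :=
  Num.sqrt (\sum_(i < d) x ord0 i ^+ 2).

Definition edist (R : realType) (d : nat) (x y : 'rV[R]_d) : R := enorm (x - y).

Definition diam (R : realType) (d : nat) (P : seq 'rV[R]_d) : R :=
  \big[Num.max/0]_(p <- P) \big[Num.max/0]_(q <- P) edist p q.

Definition in_conv (R : realType) (d : nat) (Y : seq 'rV[R]_d) (x : 'rV[R]_d) : Prop :=
  exists w : nat -> R,
    (forall i, 0 <= w i) /\ \sum_(i < size Y) w i = 1 /\
    x = \sum_(i < size Y) w i *: Y`_i.

(* (F + rho B) meets conv Y *)
Definition meets_conv (R : realType) (d : nat) (F : seq 'rV[R]_d) (rho : R)
    (Y : seq 'rV[R]_d) : Prop :=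
  exists f, exists y, f \in F /\ in_conv Y y /\ edist f y <= rho.

(* For a set Y of m points with centroid c, the mean of |t_1 + ... + t_r - r c|^2
   over the m^r tuples t in Y^r is r I(Y) / m <= r D^2 / 2, where I(Y) is the
   moment of inertia of Y about c.  Hence at least half of these tuples (all of
   them when r = 1) are close, i.e. |t_1 + ... + t_r - r c|^2 <= r D^2, and a
   tuple close for both Y and Y' forces |c_Y - c_Y'| <= 2 D / sqrt r.
   Take a maximal family of sets Y with |Y| >= eps n whose centroids are pairwise
   farther apart than 2 D / sqrt r: their sets of close tuples are disjoint
   subsets of P^r with at least (eps n)^r / r^r elements each, so the family has
   at most r^r eps^-r members, and by maximality its centroids form F. *)

From HB Require Import structures.
From mathcomp Require Import all_boot all_order all_algebra.
From mathcomp Require Import reals.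
From mathcomp Require Import ring lra zify.
From Stdlib Require Import Classical.
Set Implicit Arguments. Unset Strict Implicit. Unset Printing Implicit Defensive.
Import Order.TTheory GRing.Theory Num.Theory.
Local Open Scope ring_scope.

Lemma sumr_const_seq (V : nmodType) (I : Type) (s : seq I) (x : V) :
  \sum_(i <- s) x = x *+ size s.
Proof. by rewrite big_const_seq count_predT iter_addr_0. Qed.

Lemma ler_sum_const_seq (R : numDomainType) (I : eqType) (s : seq I)
    (F : I -> R) (b : R) :
  {in s, forall i, F i <= b} -> \sum_(i <- s) F i <= b *+ size s.
Proof. by move=> Fb; rewrite -sumr_const_seq !big_seq; apply: ler_sum. Qed.

Lemma count_gt_le (R : realDomainType) (I : eqType) (s : seq I) (f : I -> R)
    (K c : R) :
  0 <= K -> 0 <= c -> (forall i, 0 <= f i) -> \sum_(i <- s) f i <= c * K ->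
  (count (fun i => K < f i) s)%:R <= c.
Proof.
move=> + c_ge0 f_ge0 sum_le; rewrite le_eqVlt => /predU1P[K0 | K_gt0].
  move: sum_le; rewrite -K0 mulr0 => sum_le0.
  have : \sum_(i <- s) f i == 0 by rewrite eq_le sum_le0 sumr_ge0.
  rewrite psumr_eq0 // => /allP f0.
  rewrite (@eq_in_count _ _ pred0) ?count_pred0 // => i /f0 /eqP ->.
  by rewrite K0 ltxx.
rewrite -(ler_pM2r K_gt0); apply: le_trans sum_le.
rewrite mulr_natl -iter_addr_0 -big_const_seq.
rewrite [X in _ <= X](bigID (fun i => K < f i)) /=.
by rewrite -[X in X <= _]addr0 lerD ?sumr_ge0 //; apply: ler_sum => i /ltW.
Qed.

Section MaximalPacking.
Variables (T : eqType) (Q : T -> Prop) (far : rel T).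

Lemma exists_maximal_packing (N : nat) :
  (forall L, {in L, forall x, Q x} -> pairwise far L -> (size L <= N)%N) ->
  exists L, [/\ {in L, forall x, Q x}, pairwise far L &
    forall x, Q x -> has (fun y => ~~ far x y) L].
Proof.
move=> bounded.
have maximal L : ~ (exists2 x, Q x & all (far x) L) ->
    forall x, Q x -> has (fun y => ~~ far x y) L.
  move=> nomax x Qx; rewrite (@has_predC _ (far x)).
  by apply/negP => farxL; apply: nomax; exists x.
have extend L x : {in L, forall y, Q y} -> pairwise far L -> Q x -> all (far x) L ->
    {in x :: L, forall y, Q y} /\ pairwise far (x :: L).
  move=> QL farL Qx farxL; rewrite pairwise_cons farxL farL.
  by split=> // y; rewrite in_cons => /predU1P[->|/QL].
suff grow : forall k L, {in L, forall x, Q x} -> pairwise far L ->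
    (N - size L <= k)%N -> exists L', [/\ {in L', forall x, Q x}, pairwise far L' &
      forall x, Q x -> has (fun y => ~~ far x y) L'].
  by apply: (grow N [::]) => //; rewrite subn0.
elim=> [|k IH] L QL farL slack;
  (have [[x Qx farxL] | /maximal maxL] := classic (exists2 x, Q x & all (far x) L);
   last by exists L);
  have [QxL farxL'] := extend L x QL farL Qx farxL.
- by have /= := bounded _ QxL farxL'; lia.
- by apply: (IH (x :: L)) => //=; lia.
Qed.

End MaximalPacking.

Lemma pairwise_disjoint_count (R : numDomainType) (I U : eqType) (A : I -> seq U)
    (V : seq U) (a : R) (L : seq I) :
  {in L, forall i, [/\ uniq (A i), {subset A i <= V} & a <= (size (A i))%:R]} ->
  pairwise (fun i j => ~~ has (mem (A i)) (A j)) L ->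
  (size L)%:R * a <= (size V)%:R.
Proof.
move=> AL disjL.
have subW : {subset flatten (map A L) <= V}.
  by move=> u /flatten_mapP[i /AL[_ AV _] /AV].
have [uniqW sizeW] : uniq (flatten (map A L)) /\
    (size L)%:R * a <= (size (flatten (map A L)))%:R.
  elim: L AL disjL {subW} => [|i L IH] AL /=; first by rewrite mul0r.
  move=> /andP[disj_i /IH[|uniqW sizeW]].
    by move=> j jL; apply: AL; rewrite inE jL orbT.
  have [uniq_i _ size_i] := AL i (mem_head _ _).
  rewrite cat_uniq uniq_i uniqW size_cat natrD -addn1 natrD mulrDl mul1r addrC.
  split; last exact: lerD.
  rewrite andbT; apply/hasP => -[u /flatten_mapP[j jL uAj] uAi].
  by move/allP: disj_i => /(_ j jL) /hasP; apply; exists u.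
apply: le_trans sizeW _; rewrite ler_nat; exact: uniq_leq_size.
Qed.

Section Tuples.
Variable T : Type.

Fixpoint tuples (k : nat) (s : seq T) : seq (seq T) :=
  if k is k'.+1 then [seq x :: t | x <- s, t <- tuples k' s] else [:: [::]].

Lemma size_tuples k s : size (tuples k s) = (size s ^ k)%N.
Proof. by elim: k => [|k IH] //=; rewrite size_allpairs IH expnS. Qed.

End Tuples.

Lemma tuples_uniq (T : eqType) k (s : seq T) : uniq s -> uniq (tuples k s).
Proof.
move=> uniq_s; elim: k => [|k IH] //=.
by apply: allpairs_uniq => // -[x t] [x' t'] _ _ [-> ->].
Qed.

Lemma sub_tuples (T : eqType) k (s1 s2 : seq T) :
  {subset s1 <= s2} -> {subset tuples k s1 <= tuples k s2}.
Proof.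
move=> s12; elim: k => [|k IH] //= t /allpairsP[[x u] [/= xs1 us1 ->]].
by apply/allpairsP; exists (x, u); rewrite s12 ?IH.
Qed.

Section Euclidean.
Variables (R : realFieldType) (d : nat).
Implicit Types (u v p : 'rV[R]_d) (Y : seq 'rV[R]_d).

Definition sqnorm u : R := \sum_(i < d) u ord0 i ^+ 2.

Definition dotp u v : R := \sum_(i < d) u ord0 i * v ord0 i.

Lemma sqnorm_ge0 u : 0 <= sqnorm u.
Proof. by apply: sumr_ge0 => i _; rewrite sqr_ge0. Qed.

Lemma sqnorm0 : sqnorm 0 = 0.
Proof. by apply: big1 => i _; rewrite mxE expr0n. Qed.

Lemma sqnormN u : sqnorm (- u) = sqnorm u.
Proof. by apply: eq_bigr => i _; rewrite mxE sqrrN. Qed.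

Lemma sqnormB u v : sqnorm (u - v) = sqnorm (v - u).
Proof. by rewrite -opprB sqnormN. Qed.

Lemma sqnormZ (a : R) u : sqnorm (a *: u) = a ^+ 2 * sqnorm u.
Proof. by rewrite /sqnorm mulr_sumr; apply: eq_bigr => i _; rewrite mxE exprMn. Qed.

Lemma sqnormD u v : sqnorm (u + v) = sqnorm u + 2 * dotp u v + sqnorm v.
Proof.
rewrite /sqnorm /dotp mulr_sumr -!big_split /=; apply: eq_bigr => i _.
by rewrite !mxE; ring.
Qed.

Lemma sqnormD_le u v : sqnorm (u + v) <= 2 * sqnorm u + 2 * sqnorm v.
Proof.
rewrite /sqnorm !mulr_sumr -big_split; apply: ler_sum => i _ /=; rewrite mxE.
have := sqr_ge0 (u ord0 i - v ord0 i); nra.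
Qed.

Lemma dotp0 u : dotp u 0 = 0.
Proof. by apply: big1 => i _; rewrite mxE mulr0. Qed.

Lemma dotp_sumr (I : Type) (s : seq I) u (F : I -> 'rV[R]_d) :
  dotp u (\sum_(x <- s) F x) = \sum_(x <- s) dotp u (F x).
Proof.
rewrite /dotp exchange_big; apply: eq_bigr => i _.
by rewrite summxE mulr_sumr.
Qed.

Definition centroid Y : 'rV[R]_d := (size Y)%:R^-1 *: \sum_(y <- Y) y.

Definition inertia Y : R := \sum_(y <- Y) sqnorm (y - centroid Y).

Lemma inertia_ge0 Y : 0 <= inertia Y.
Proof. by apply: sumr_ge0 => y _; apply: sqnorm_ge0. Qed.

Lemma sum_sub_centroid Y : (0 < size Y)%N -> \sum_(y <- Y) (y - centroid Y) = 0.
Proof.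
move=> Y_gt0; rewrite big_split /= sumrN sumr_const_seq -scaler_nat /centroid.
by rewrite scalerA mulfV ?scale1r ?subrr // pnatr_eq0 -lt0n.
Qed.

Lemma parallel_axis Y u : (0 < size Y)%N ->
  \sum_(y <- Y) sqnorm (u + (y - centroid Y)) = (size Y)%:R * sqnorm u + inertia Y.
Proof.
move=> Y_gt0; under eq_bigr => y _ do rewrite sqnormD.
rewrite !big_split /= sumr_const_seq mulr_natl -mulr_sumr -dotp_sumr.
by rewrite sum_sub_centroid // dotp0 mulr0 addr0.
Qed.

Lemma inertia_le Y (D2 : R) : (0 < size Y)%N ->
  {in Y &, forall y y', sqnorm (y - y') <= D2} -> 2 * inertia Y <= (size Y)%:R * D2.
Proof.
move=> Y_gt0 YD2; set m : R := (size Y)%:R.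
have m_gt0 : 0 < m by rewrite ltr0n.
have double_sum : \sum_(y' <- Y) \sum_(y <- Y) sqnorm (y - y') = m * (2 * inertia Y).
  transitivity
    (\sum_(y' <- Y) \sum_(y <- Y) sqnorm ((centroid Y - y') + (y - centroid Y))).
    apply: eq_bigr => y' _; apply: eq_bigr => y _.
    by rewrite [in RHS]addrC addrA subrK.
  under eq_bigr => y' _ do rewrite parallel_axis // sqnormB.
  rewrite big_split /= -mulr_sumr sumr_const_seq -mulr_natl -/(inertia Y); ring.
rewrite -(ler_pM2l m_gt0) -double_sum /m !mulr_natl.
apply: ler_sum_const_seq => y' y'Y; apply: ler_sum_const_seq => y yY.
exact: YD2.
Qed.

Lemma sqnorm_centroid_sub_le Y p (D2 : R) : (0 < size Y)%N ->
  {in Y, forall y, sqnorm (y - p) <= D2} -> sqnorm (centroid Y - p) <= D2.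
Proof.
move=> Y_gt0 YD2; have m_gt0 : 0 < (size Y)%:R :> R by rewrite ltr0n.
have sum_eq : \sum_(y <- Y) sqnorm (y - p) =
    (size Y)%:R * sqnorm (centroid Y - p) + inertia Y.
  rewrite -parallel_axis //; apply: eq_bigr => y _; congr sqnorm.
  by rewrite [RHS]addrC addrA subrK.
have := ler_sum_const_seq YD2; rewrite sum_eq -[D2 *+ _]mulr_natl => le_sum.
by rewrite -(ler_pM2l m_gt0); have := inertia_ge0 Y; lra.
Qed.

Lemma sum_tuples_sqnorm Y k : (0 < size Y)%N ->
  (size Y)%:R * \sum_(t <- tuples k Y) sqnorm (\sum_(x <- t) x - k%:R *: centroid Y)
  = k%:R * (size Y)%:R ^+ k * inertia Y.
Proof.
move=> Y_gt0; elim: k => [|k IH] /=.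
  by rewrite big_seq1 big_nil scale0r subr0 sqnorm0 mulr0 !mul0r.
have shift t y : \sum_(x <- y :: t) x - k.+1%:R *: centroid Y =
    (\sum_(x <- t) x - k%:R *: centroid Y) + (y - centroid Y).
  rewrite big_cons; move: (\sum_(x <- t) x) => S.
  by apply/rowP => i; rewrite !mxE mulrSr; ring.
rewrite big_allpairs_dep /= exchange_big /=.
under eq_bigr => t _
  do (under eq_bigr => y _ do rewrite shift; rewrite parallel_axis //).
rewrite big_split /= -mulr_sumr sumr_const_seq size_tuples.
rewrite -[inertia Y *+ _]mulr_natl natrX.
by rewrite mulrDr IH exprS mulrSr; ring.
Qed.

End Euclidean.

Section CloseTuples.
Variables (R : realFieldType) (d : nat).
Implicit Types (Y : seq 'rV[R]_d) (K : R).

Definition close_tuples r K Y : seq (seq 'rV[R]_d) :=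
  [seq t <- tuples r Y | sqnorm (\sum_(x <- t) x - r%:R *: centroid Y) <= K].

Lemma close_tuples_centroid r K Y Y' t :
  t \in close_tuples r K Y -> t \in close_tuples r K Y' ->
  r%:R ^+ 2 * sqnorm (centroid Y - centroid Y') <= 4 * K.
Proof.
rewrite !mem_filter => /andP[closeY _] /andP[closeY' _].
set S := \sum_(x <- t) x.
have := sqnormD_le (S - r%:R *: centroid Y') (- (S - r%:R *: centroid Y)).
rewrite sqnormN opprB [_ + (_ - S)]addrC addrA subrK -scalerBr sqnormZ.
lra.
Qed.

Lemma close_tuples_half r K Y (D2 : R) : (0 < size Y)%N ->
  {in Y &, forall y y', sqnorm (y - y') <= D2} -> r%:R * D2 <= K ->
  (size Y)%:R ^+ r <= 2 * (size (close_tuples r K Y))%:R :> R.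
Proof.
move=> Y_gt0 YD2 K_ge; set m : R := (size Y)%:R.
have m_gt0 : 0 < m by rewrite ltr0n.
have mr_ge0 : 0 <= m ^+ r by rewrite exprn_ge0 // ltW.
have inertiaY := inertia_le Y_gt0 YD2.
have D2_ge0 : 0 <= D2.
  rewrite -(pmulr_rge0 _ m_gt0); apply: le_trans inertiaY.
  by rewrite mulr_ge0 ?inertia_ge0.
have K_ge0 : 0 <= K := le_trans (mulr_ge0 (ler0n _ _) D2_ge0) K_ge.
pose f t := sqnorm (\sum_(x <- t) x - r%:R *: centroid Y).
have sum_le : \sum_(t <- tuples r Y) f t <= (m ^+ r / 2) * K.
  rewrite -(ler_pM2l m_gt0) sum_tuples_sqnorm //.
  have : r%:R * m ^+ r * (2 * inertia Y) <= r%:R * m ^+ r * (m * D2).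
    by rewrite ler_wpM2l // mulr_ge0.
  have : r%:R * D2 * m <= K * m by rewrite ler_wpM2r // ltW.
  nra.
have := count_gt_le K_ge0 _ (fun t => sqnorm_ge0 _) sum_le.
rewrite (_ : count _ _ = count (predC (fun t => f t <= K)) (tuples r Y)); last first.
  by apply: eq_count => t; rewrite /= ltNge.
have := count_predC (fun t => f t <= K) (tuples r Y).
rewrite size_tuples /close_tuples size_filter => /(congr1 (fun n => n%:R : R)).
rewrite natrD natrX -/m; lra.
Qed.

Lemma close_tuples1 K Y (D2 : R) : (0 < size Y)%N ->
  {in Y &, forall y y', sqnorm (y - y') <= D2} -> D2 <= K ->
  size (close_tuples 1 K Y) = size Y.
Proof.
move=> Y_gt0 YD2 D2K.
rewrite size_filter (@eq_in_count _ _ predT) ?count_predT ?size_tuples ?expn1 //.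
move=> s /allpairsP[[y t] [/= yY]]; rewrite inE => /eqP -> ->.
rewrite big_seq1 scale1r sqnormB /=; apply: le_trans D2K.
by apply: sqnorm_centroid_sub_le => // y' y'Y; apply: YD2.
Qed.

Lemma close_tuples_many r K Y (D2 : R) : (0 < r)%N -> (0 < size Y)%N ->
  {in Y &, forall y y', sqnorm (y - y') <= D2} -> r%:R * D2 <= K ->
  (size Y)%:R ^+ r <= r%:R ^+ r * (size (close_tuples r K Y))%:R :> R.
Proof.
move=> r_gt0 Y_gt0 YD2 K_ge; have [r_le1 | r_ge2] := leqP r 1.
  have r1 : r = 1%N by apply/eqP; rewrite eqn_leq r_le1.
  move: K_ge; rewrite r1 mul1r => D2K.
  by rewrite (close_tuples1 Y_gt0 YD2 D2K) !expr1 mul1r.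
apply: le_trans (close_tuples_half Y_gt0 YD2 K_ge) _.
rewrite ler_wpM2r // -natrX ler_nat (leq_trans r_ge2) //.
by rewrite -{1}(expn1 r) leq_pexp2l // ltnW.
Qed.

End CloseTuples.

Section CentroidNet.
Variables (R : realType) (d : nat).
Implicit Types (p q : 'rV[R]_d) (P Y : seq 'rV[R]_d).

Lemma edist_le p q (rho : R) :
  0 <= rho -> sqnorm (p - q) <= rho ^+ 2 -> edist p q <= rho.
Proof.
move=> rho_ge0 le_sq; rewrite /edist /enorm -(ger0_norm rho_ge0) -sqrtr_sqr.
by rewrite ler_sqrt ?sqr_ge0.
Qed.

Lemma diam_ge0 P : 0 <= diam P.
Proof. exact: bigmax_ge_id. Qed.

Lemma sqnorm_sub_le_diam P p q : p \in P -> q \in P -> sqnorm (p - q) <= diam P ^+ 2.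
Proof.
move=> pP qP; have pq : edist p q <= diam P.
  apply: le_trans (le_bigmax_seq 0 _ predT
    (fun p => \big[Num.max/0]_(q <- P) edist p q) pP isT).
  exact: (le_bigmax_seq 0 _ predT (fun q => edist p q) qP isT).
rewrite -(sqr_sqrtr (sqnorm_ge0 (p - q))); have := sqrtr_ge0 (sqnorm (p - q)).
by move: pq; rewrite /edist /enorm; nra.
Qed.

Lemma in_conv_centroid Y : (0 < size Y)%N -> in_conv Y (centroid Y).
Proof.
move=> Y_gt0; exists (fun=> (size Y)%:R^-1); split=> [i|]; first by rewrite invr_ge0.
split; first by rewrite sumr_const card_ord -[_ *+ _]mulr_natr mulVf ?pnatr_eq0 -?lt0n.
by rewrite /centroid (big_nth 0) big_mkord scaler_sumr.
Qed.

Lemma edist_centroid_close P r Y Y' t : (0 < r)%N ->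
  t \in close_tuples r (r%:R * diam P ^+ 2) Y ->
  t \in close_tuples r (r%:R * diam P ^+ 2) Y' ->
  edist (centroid Y) (centroid Y') <= 2 * diam P / Num.sqrt r%:R.
Proof.
move=> r_gt0 tY tY'; have r_gt0' : 0 < r%:R :> R by rewrite ltr0n.
apply: edist_le; first by rewrite divr_ge0 ?sqrtr_ge0 ?mulr_ge0 ?diam_ge0.
rewrite expr_div_n sqr_sqrtr ?ler0n // ler_pdivlMr //.
have := close_tuples_centroid tY tY'; nra.
Qed.

Definition heavy P (eps : R) Y : Prop :=
  [/\ uniq Y, {subset Y <= P} & eps * (size P)%:R <= (size Y)%:R].

Lemma heavy_size_gt0 P eps Y : 0 < eps -> (0 < size P)%N -> heavy P eps Y ->
  (0 < size Y)%N.
Proof.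
move=> eps_gt0 P_gt0 [_ _ YP]; rewrite -(ltr0n R); apply: lt_le_trans YP.
by rewrite mulr_gt0 ?ltr0n.
Qed.

Lemma heavy_close_tuples_many P eps r Y : 0 < eps -> (0 < r)%N -> (0 < size P)%N ->
  heavy P eps Y ->
  (eps * (size P)%:R) ^+ r <=
    r%:R ^+ r * (size (close_tuples r (r%:R * diam P ^+ 2) Y))%:R.
Proof.
move=> eps_gt0 r_gt0 P_gt0 heavyY; have [_ YP YP_size] := heavyY.
have Y_gt0 := heavy_size_gt0 eps_gt0 P_gt0 heavyY.
apply: le_trans (close_tuples_many r_gt0 Y_gt0 _ (lexx _)); last first.
  by move=> y y' yY y'Y; apply: sqnorm_sub_le_diam; apply: YP.
by rewrite lerXn2r ?nnegrE ?ler0n // mulr_ge0 // ?ler0n ltW.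
Qed.

Lemma separated_heavy_family_size P eps r L : 0 < eps -> (0 < r)%N -> (0 < size P)%N ->
  {in L, forall Y, heavy P eps Y} ->
  pairwise (fun Y Y' =>
    2 * diam P / Num.sqrt r%:R < edist (centroid Y') (centroid Y)) L ->
  (size L)%:R <= r%:R ^+ r / eps ^+ r.
Proof.
move=> eps_gt0 r_gt0 P_gt0 heavyL farL; set K := r%:R * diam P ^+ 2.
have rr_gt0 : 0 < r%:R ^+ r :> R by rewrite exprn_gt0 ?ltr0n.
have nr_gt0 : 0 < (size P)%:R ^+ r :> R by rewrite exprn_gt0 ?ltr0n.
have epsr_gt0 : 0 < eps ^+ r by rewrite exprn_gt0.
have packed : (size L)%:R * ((eps * (size P)%:R) ^+ r / r%:R ^+ r)
    <= (size (tuples r P))%:R.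
  apply: (pairwise_disjoint_count (A := close_tuples r K)) => [Y /heavyL heavyY|].
    have [uniqY YP _] := heavyY; split.
    - exact: filter_uniq (tuples_uniq _ uniqY).
    - by move=> t; rewrite mem_filter => /andP[_]; apply: sub_tuples.
    - by rewrite ler_pdivrMr // [X in _ <= X]mulrC; apply: heavy_close_tuples_many.
  apply: sub_pairwise farL => Y Y' far_YY'; apply/hasP => -[t tY' tY].
  by move: far_YY'; rewrite ltNge (edist_centroid_close r_gt0 tY' tY).
move: packed; rewrite size_tuples natrX exprMn !mulrA ler_pdivrMr // => packed.
by rewrite ler_pdivlMr // -(ler_pM2r nr_gt0) [X in _ <= X]mulrC.
Qed.

End CentroidNet.

Theorem theorem7p3 (R : realType) (d : nat) (P : seq 'rV[R]_d) (r : nat) (eps : R) :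
  uniq P -> (1 <= r <= size P)%N -> 0 < eps ->
  exists F : seq 'rV[R]_d,
    (size F)%:R <= (r%:R ^+ r) / (eps ^+ r) /\
    forall Y : seq 'rV[R]_d, uniq Y -> {subset Y <= P} ->
      eps * (size P)%:R <= (size Y)%:R ->
      meets_conv F (7 / 2 * diam P / Num.sqrt r%:R) Y.
Proof.
move=> _ /andP[r_gt0 r_le_n] eps_gt0; have P_gt0 := leq_trans r_gt0 r_le_n.
pose rho := 2 * diam P / Num.sqrt r%:R.
pose far (Y Y' : seq 'rV[R]_d) := rho < edist (centroid Y') (centroid Y).
pose bound := r%:R ^+ r / eps ^+ r.
have size_le L := @separated_heavy_family_size R d P eps r L eps_gt0 r_gt0 P_gt0.
have packing_bounded (L : seq (seq 'rV[R]_d)) :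
    {in L, forall Y, heavy P eps Y} -> pairwise far L -> (size L <= Num.bound bound)%N.
  move=> heavyL farL; apply: ltnW; rewrite -(ltr_nat R).
  apply: le_lt_trans (size_le L heavyL farL) (archi_boundP _).
  by rewrite divr_ge0 ?exprn_ge0 ?ler0n ?ltW.
have [L [heavyL farL maxL]] := exists_maximal_packing packing_bounded.
exists (map (@centroid R d) L); split; first by rewrite size_map; apply: size_le.
move=> Y uniqY YP YP_size; have heavyY : heavy P eps Y by [].
have /hasP[Y' Y'L] := maxL Y heavyY; rewrite -leNgt => near.
exists (centroid Y'), (centroid Y); split; first exact: map_f.
split; first exact/in_conv_centroid/(heavy_size_gt0 eps_gt0 P_gt0 heavyY).
apply: le_trans near _; rewrite ler_wpM2r ?invr_ge0 ?sqrtr_ge0 // ler_wpM2r ?diam_ge0 //.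
lra.
Qed.
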